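(* After the change of variables $g=g(\bar f,\bar g)$ given by relation (B), the curve in $(\bar f,\bar g)$ defined by $L_{1u}=0$ passes through the points $\bar Q(z)$ and $\bar Q(z/q)$, where $\bar Q(u)=(\bar f,\bar g)$ is defined by $\bar f=\bar f(u)$ and $$\frac{\bar g-\bar g(u)}{\bar g-\bar g(\frac{h_1}{qu})}=\frac{\bar Y(qu)}{\bar Y(u)},$$ for $u=z$ and $u=z/q$.
   Context: Let $h_1,h_2,u_1,\dots,u_8$ be generic nonzero complex parameters, $z$ generic, and $q=h_1^2h_2^2/(u_1\cdots u_8)$. Put $f(u)=u+h_1/u$, $g(u)=u+h_2/u$, $\bar f(u)=u+\frac{h_1}{qu}$, $\bar g(u)=u+\frac{h_2q}{u}$. Let $\varphi_u=(\bar f-g)\big(\frac{q\bar f}{h_1}-\frac{g}{h_2}\big)-(\frac{h_1}{q}-h_2)\big(\frac q{h_1}-\frac1{h_2}\big)$. Let $U(z)=\prod_{i=1}^8(z-u_i)=\sum_{i=0}^8(-1)^i m_{8-i}z^i$ (so $m_0=1$, $m_8=h_1^2h_2^2/q$). For a parameter $h$ define polynomials in a variable $x$: $P_n(h,x)=m_0x^4-m_1x^3+(m_2-3hm_0-h^{-3}m_8)x^2+(2hm_1-m_3+h^{-2}m_7)x+(h^2m_0-hm_2+m_4-h^{-1}m_6+h^{-2}m_8)$, $P_d(h,x)=m_8x^4-hm_7x^3+(h^2m_6-3hm_8-h^5m_0)x^2+(2h^2m_7-h^3m_5+h^5m_1)x+(h^6m_0-h^5m_2+h^4m_4-h^3m_6+h^2m_8)$.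 Define, for variables $f_0,f,g$, $V(f_0,f)=q\Big[(f_0-g)(f-g)-\big(\tfrac{h_1}{q}-h_2\big)(h_1-h_2)\tfrac1{h_2}\Big]P_d(h_2,g)-h_1^2h_2^4\Big[\big(\tfrac{f_0q}{h_1}-\tfrac{g}{h_2}\big)\big(\tfrac{f}{h_1}-\tfrac{g}{h_2}\big)-\big(\tfrac{q}{h_1}-\tfrac1{h_2}\big)\big(\tfrac1{h_1}-\tfrac1{h_2}\big)h_2\Big]P_n(h_2,g)$ (it also depends on $g$). For a function $\bar Y$ of $z$ and variables $(\bar f,g)$ define $$L_{1u}=\frac{U(\frac zq)}{(z^2-h_1q^2)\{\bar f-\bar f(\frac zq)\}}\Big[\bar Y(\tfrac zq)-\frac{z^8}{h_1^4q^4}\frac{U(\frac{h_1}{z})}{U(\frac zq)}\frac{g-g(\frac zq)}{g-g(\frac{h_1}{z})}\bar Y(z)\Big]+\frac{z^8U(\frac{h_1}{qz})}{(qz^2-h_1)h_1^4\{\bar f-\bar f(z)\}}\Big[\bar Y(qz)-\frac{h_1^4}{q^4z^8}\frac{U(z)}{U(\frac{h_1}{qz})}\frac{g-g(\frac{h_1}{qz})}{g-g(z)}\bar Y(z)\Big]+\frac{(h_1-h_2q)z^2(z^2-h_1)V(\bar f,f(z))}{h_1^3h_2^3q^5\,g\,\varphi_u\{g-g(\frac{h_1}{z})\}\{g-g(z)\}}\bar Y(z).$$ Relation (B), defining a birational correspondence $g\leftrightarrow\bar g$ depending on $\bar f$: $$\frac{(\bar f-\bar g)(\bar f-g)-(\frac{h_1}{q}-h_2q)(\frac{h_1}{q}-h_2)\frac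 q{h_1}}{(\frac{\bar fq}{h_1}-\frac{\bar g}{h_2q})(\frac{\bar fq}{h_1}-\frac g{h_2})-(\frac q{h_1}-\frac1{h_2q})(\frac q{h_1}-\frac1{h_2})\frac{h_1}q}=\frac{h_1^4h_2^2}{q^3}\frac{P_n(\frac{h_1}q,\bar f)}{P_d(\frac{h_1}q,\bar f)}.$$ *)

(* Definitions for Lemma 6 (curve L_{1u} = 0 and the points
   \bar Q(z), \bar Q(z/q)).  The complex numbers are modelled by an arbitrary
   numeric algebraically closed field R (e.g. algC, or C). *)
From HB Require Import structures.
From mathcomp Require Import all_boot all_order all_algebra.
Set Implicit Arguments. Unset Strict Implicit. Unset Printing Implicit Defensive.
Import Order.TTheory GRing.Theory Num.Theory.
Local Open Scope ring_scope.

Section Lemma6Defs.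
Variable R : numClosedFieldType.

Definition qpar (h1 h2 : R) (u : 'I_8 -> R) : R :=
  h1 ^+ 2 * h2 ^+ 2 / \prod_(i < 8) u i.

Definition Ufun (u : 'I_8 -> R) (x : R) : R := \prod_(i < 8) (x - u i).

(* U as a polynomial; U(z) = sum_i (-1)^i m_{8-i} z^i, i.e.
   m_k = (-1)^k * (coefficient of z^(8-k) in U). *)
Definition Upoly (u : 'I_8 -> R) : {poly R} := \prod_(i < 8) ('X - (u i)%:P).
Definition mcoef (u : 'I_8 -> R) (k : nat) : R :=
  (-1) ^+ k * (Upoly u)`_(8 - k).

Definition ff (h1 : R) (x : R) : R := x + h1 / x.
Definition gg (h2 : R) (x : R) : R := x + h2 / x.
Definition ffb (h1 q : R) (x : R) : R := x + h1 / (q * x).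
Definition ggb (h2 q : R) (x : R) : R := x + h2 * q / x.

Definition Pn (u : 'I_8 -> R) (h x : R) : R :=
  let m := mcoef u in
  m 0%N * x ^+ 4 - m 1%N * x ^+ 3
  + (m 2%N - 3%:R * h * m 0%N - h ^- 3 * m 8%N) * x ^+ 2
  + (2%:R * h * m 1%N - m 3%N + h ^- 2 * m 7%N) * x
  + (h ^+ 2 * m 0%N - h * m 2%N + m 4%N - h^-1 * m 6%N + h ^- 2 * m 8%N).

Definition Pd (u : 'I_8 -> R) (h x : R) : R :=
  let m := mcoef u in
  m 8%N * x ^+ 4 - h * m 7%N * x ^+ 3
  + (h ^+ 2 * m 6%N - 3%:R * h * m 8%N - h ^+ 5 * m 0%N) * x ^+ 2
  + (2%:R * h ^+ 2 * m 7%N - h ^+ 3 * m 5%N + h ^+ 5 * m 1%N) * x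
  + (h ^+ 6 * m 0%N - h ^+ 5 * m 2%N + h ^+ 4 * m 4%N - h ^+ 3 * m 6%N
     + h ^+ 2 * m 8%N).

Definition phiu (h1 h2 q fb g : R) : R :=
  (fb - g) * (q * fb / h1 - g / h2) - (h1 / q - h2) * (q / h1 - 1 / h2).

Definition Vfun (h1 h2 : R) (u : 'I_8 -> R) (f0 f g : R) : R :=
  let q := qpar h1 h2 u in
  q * ((f0 - g) * (f - g) - (h1 / q - h2) * (h1 - h2) / h2) * Pd u h2 g
  - h1 ^+ 2 * h2 ^+ 4 *
    ((f0 * q / h1 - g / h2) * (f / h1 - g / h2)
     - (q / h1 - 1 / h2) * (1 / h1 - 1 / h2) * h2) * Pn u h2 g.

Definition T1res (h1 h2 : R) (u : 'I_8 -> R) (Yb : R -> R) (z g : R) : R :=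
  let q := qpar h1 h2 u in
  Ufun u (z / q) / (z ^+ 2 - h1 * q ^+ 2) *
  (Yb (z / q) - z ^+ 8 / (h1 ^+ 4 * q ^+ 4) * (Ufun u (h1 / z) / Ufun u (z / q))
                * ((g - gg h2 (z / q)) / (g - gg h2 (h1 / z))) * Yb z).

Definition T2res (h1 h2 : R) (u : 'I_8 -> R) (Yb : R -> R) (z g : R) : R :=
  let q := qpar h1 h2 u in
  z ^+ 8 * Ufun u (h1 / (q * z)) / ((q * z ^+ 2 - h1) * h1 ^+ 4) *
  (Yb (q * z) - h1 ^+ 4 / (q ^+ 4 * z ^+ 8) * (Ufun u z / Ufun u (h1 / (q * z)))
                * ((g - gg h2 (h1 / (q * z))) / (g - gg h2 z)) * Yb z).

Definition T3 (h1 h2 : R) (u : 'I_8 -> R) (Yb : R -> R) (z fb g : R) : R :=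
  let q := qpar h1 h2 u in
  (h1 - h2 * q) * z ^+ 2 * (z ^+ 2 - h1) * Vfun h1 h2 u fb (ff h1 z) g /
  (h1 ^+ 3 * h2 ^+ 3 * q ^+ 5 * g * phiu h1 h2 q fb g
   * (g - gg h2 (h1 / z)) * (g - gg h2 z)) * Yb z.

Definition L1u (h1 h2 : R) (u : 'I_8 -> R) (Yb : R -> R) (z fb g : R) : R :=
  let q := qpar h1 h2 u in
  T1res h1 h2 u Yb z g / (fb - ffb h1 q (z / q))
  + T2res h1 h2 u Yb z g / (fb - ffb h1 q z)
  + T3 h1 h2 u Yb z fb g.

(* Local equations of the curve L_{1u} = 0 near the polar lines
   fbar = fbar(z) and fbar = fbar(z/q): L_{1u} multiplied by the vanishing
   polar factor, with the cancellation carried out, i.e.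
   L1u_at_z fb g = (fb - fbar(z)) * L1u fb g  and
   L1u_at_zq fb g = (fb - fbar(z/q)) * L1u fb g  (for fb off the polar line). *)
Definition L1u_at_z (h1 h2 : R) (u : 'I_8 -> R) (Yb : R -> R) (z fb g : R) : R :=
  let q := qpar h1 h2 u in
  (fb - ffb h1 q z) *
    (T1res h1 h2 u Yb z g / (fb - ffb h1 q (z / q)) + T3 h1 h2 u Yb z fb g)
  + T2res h1 h2 u Yb z g.

Definition L1u_at_zq (h1 h2 : R) (u : 'I_8 -> R) (Yb : R -> R) (z fb g : R) : R :=
  let q := qpar h1 h2 u in
  (fb - ffb h1 q (z / q)) *
    (T2res h1 h2 u Yb z g / (fb - ffb h1 q z) + T3 h1 h2 u Yb z fb g)
  + T1res h1 h2 u Yb z g.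

Definition BnumL (h1 h2 q fb gb g : R) : R :=
  (fb - gb) * (fb - g) - (h1 / q - h2 * q) * (h1 / q - h2) * q / h1.
Definition BdenL (h1 h2 q fb gb g : R) : R :=
  (fb * q / h1 - gb / (h2 * q)) * (fb * q / h1 - g / h2)
  - (q / h1 - 1 / (h2 * q)) * (q / h1 - 1 / h2) * h1 / q.
Definition relB (h1 h2 : R) (u : 'I_8 -> R) (fb gb g : R) : Prop :=
  let q := qpar h1 h2 u in
  BnumL h1 h2 q fb gb g / BdenL h1 h2 q fb gb g
  = h1 ^+ 4 * h2 ^+ 2 / q ^+ 3 * (Pn u (h1 / q) fb / Pd u (h1 / q) fb).

Definition QbarPt (h1 h2 : R) (u : 'I_8 -> R) (Yb : R -> R) (w fb gb : R) : Prop :=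
  let q := qpar h1 h2 u in
  fb = ffb h1 q w /\
  (gb - ggb h2 q w) / (gb - ggb h2 q (h1 / (q * w))) = Yb (q * w) / Yb w.

End Lemma6Defs.

From HB Require Import structures.
From mathcomp Require Import all_boot all_order all_algebra.
From mathcomp Require Import ring.
Set Implicit Arguments. Unset Strict Implicit. Unset Printing Implicit Defensive.
Import Order.TTheory GRing.Theory Num.Theory.
Local Open Scope ring_scope.

(* On the line fbar = fbar(w) = w + (h1/q)/w the polynomials P_n(h1/q, .) and
   P_d(h1/q, .) are expressed through U(w) and U(h1/(q w)), and relation (B),
   cleared of denominators, factors as
     (q w^2 + h1) * [h1^4 U(w) (g - g(h1/(qw))) (gbar - gbar(h1/(qw)))
                      - q^4 w^8 U(h1/(qw)) (g - g(w)) (gbar - gbar(w))].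
   The first factor cannot vanish when (B) determines g uniquely, so the
   bracket vanishes; at the point Qbar(w) the ratio of the gbar-factors is
   Ybar(qw)/Ybar(w), and the bracket becomes exactly the vanishing of the
   residue of L_{1u} along fbar = fbar(w), for w = z and w = z/q. *)

Lemma eq_div_mul_div (F : fieldType) (N D P Q k : F) : D != 0 -> Q != 0 ->
  N / D = k * (P / Q) <-> N * Q - k * P * D = 0.
Proof.
move=> D0 Q0; rewrite mulrA; split=> [E|/eqP].
  by apply/eqP; rewrite subr_eq0 -(eqr_div _ _ D0 Q0) E.
by rewrite subr_eq0 -(eqr_div _ _ D0 Q0) => /eqP.
Qed.

Section Joukowski.
Variable R : numClosedFieldType.

Lemma Ufun_horner (u : 'I_8 -> R) x : Ufun u x = \sum_(i < 9) (Upoly u)`_i * x ^+ i.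
Proof.
rewrite /Ufun -horner_coef_wide.
  by rewrite /Upoly horner_prod; apply: eq_bigr => i _; rewrite hornerXsubC.
by rewrite /Upoly size_prod_XsubC /index_enum -enumT size_enum_ord.
Qed.

Lemma Pn_joukowski (u : 'I_8 -> R) (h x : R) : h != 0 -> x != 0 -> x ^+ 2 - h != 0 ->
  Pn u h (x + h / x)
  = (Ufun u x / x ^+ 2 - x ^+ 4 * Ufun u (h / x) / h ^+ 3) / (x ^+ 2 - h).
Proof.
move=> h0 x0 xh.
rewrite /Pn /mcoef !Ufun_horner !big_ord_recr /= !big_ord0 !subSS !subn0.
by field; rewrite ?xh ?h0 ?x0.
Qed.

Lemma Pd_joukowski (u : 'I_8 -> R) (h x : R) : h != 0 -> x != 0 -> x ^+ 2 - h != 0 ->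
  Pd u h (x + h / x)
  = (x ^+ 6 * Ufun u (h / x) - h ^+ 5 * Ufun u x / x ^+ 4) / (x ^+ 2 - h).
Proof.
move=> h0 x0 xh.
rewrite /Pd /mcoef !Ufun_horner !big_ord_recr /= !big_ord0 !subSS !subn0.
by field; rewrite ?xh ?h0 ?x0.
Qed.

(* The denominator of (B) is affine in g, so it cannot vanish at both g + 1 and g - 1. *)
Lemma BdenL_neq0_elsewhere (h1 h2 q fb gb g : R) : BdenL h1 h2 q fb gb g != 0 ->
  exists2 g', g' != g & BdenL h1 h2 q fb gb g' != 0.
Proof.
move=> D0.
have mid : BdenL h1 h2 q fb gb (g + 1) + BdenL h1 h2 q fb gb (g - 1)
           = 2 * BdenL h1 h2 q fb gb g by rewrite /BdenL; ring.
have [Dp|Dp] := eqVneq (BdenL h1 h2 q fb gb (g + 1)) 0; last first.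
  by exists (g + 1); rewrite // -subr_eq0 addrAC subrr add0r oner_eq0.
exists (g - 1); first by rewrite -subr_eq0 addrAC subrr add0r oppr_eq0 oner_eq0.
by move: mid; rewrite Dp add0r => ->; rewrite mulf_neq0 ?pnatr_eq0.
Qed.

End Joukowski.

Section LocalEquations.
Variable R : numClosedFieldType.
Variables (h1 h2 : R) (u : 'I_8 -> R) (Yb : R -> R).
Hypotheses (h1_neq0 : h1 != 0) (h2_neq0 : h2 != 0) (q_neq0 : qpar h1 h2 u != 0).
Local Notation q := (qpar h1 h2 u).

Definition relB_residue (w gb g : R) : R :=
  h1 ^+ 4 * Ufun u w * (g - gg h2 (h1 / (q * w))) * (gb - ggb h2 q (h1 / (q * w)))
  - q ^+ 4 * w ^+ 8 * Ufun u (h1 / (q * w)) * (g - gg h2 w) * (gb - ggb h2 q w).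

Lemma relB_factor (w gb g : R) : w != 0 -> w ^+ 2 * q != h1 ->
  Pd u (h1 / q) (ffb h1 q w) != 0 -> BdenL h1 h2 q (ffb h1 q w) gb g != 0 ->
  relB h1 h2 u (ffb h1 q w) gb g <-> (q * w ^+ 2 + h1) * relB_residue w gb g = 0.
Proof.
move=> w0 wq Pd0 D0.
have hq0 : h1 / q != 0 by rewrite mulf_neq0 ?invr_eq0.
have wh0 : w ^+ 2 - h1 / q != 0.
  by rewrite subr_eq0; apply: contra wq => /eqP ->; rewrite divfK.
have vE : h1 / (q * w) = h1 / q / w by rewrite invfM mulrA.
have fE : ffb h1 q w = w + h1 / q / w by rewrite /ffb vE.
rewrite /relB eq_div_mul_div //.
have -> : (q * w ^+ 2 + h1) * relB_residue w gb g
  = - (q ^+ 5 * w ^+ 4 * (w ^+ 2 - h1 / q)) *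
    (BnumL h1 h2 q (ffb h1 q w) gb g * Pd u (h1 / q) (ffb h1 q w)
     - h1 ^+ 4 * h2 ^+ 2 / q ^+ 3 * Pn u (h1 / q) (ffb h1 q w)
       * BdenL h1 h2 q (ffb h1 q w) gb g).
  rewrite fE Pn_joukowski // Pd_joukowski // /relB_residue vE /BnumL /BdenL /gg /ggb.
  by field; rewrite q_neq0 h2_neq0 h1_neq0 w0 subr_eq0 wq.
have c0 : - (q ^+ 5 * w ^+ 4 * (w ^+ 2 - h1 / q)) != 0.
  by rewrite oppr_eq0 mulf_neq0 // mulf_neq0 // expf_neq0.
by split=> [->|/eqP]; rewrite ?mulr0 // mulf_eq0 (negbTE c0) => /eqP.
Qed.

Lemma relB_residue_eq0 (w gb g : R) : w != 0 -> w ^+ 2 * q != h1 ->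
  Pd u (h1 / q) (ffb h1 q w) != 0 -> BdenL h1 h2 q (ffb h1 q w) gb g != 0 ->
  (forall g', relB h1 h2 u (ffb h1 q w) gb g' <-> g' = g) ->
  relB_residue w gb g = 0.
Proof.
move=> w0 wq Pd0 D0 relB_uniq.
have /(relB_factor w0 wq Pd0 D0)/eqP := (relB_uniq g).2 erefl.
rewrite mulf_eq0 => /orP[/eqP branch|/eqP //]; exfalso.
have [g' g'_neq D'0] := BdenL_neq0_elsewhere D0.
have : relB h1 h2 u (ffb h1 q w) gb g'.
  by apply/(relB_factor w0 wq Pd0 D'0); rewrite branch mul0r.
by move/relB_uniq/eqP; rewrite (negbTE g'_neq).
Qed.

Lemma relB_at_Qbar (w gb g : R) : w != 0 -> w ^+ 2 * q != h1 -> Yb w != 0 ->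
  QbarPt h1 h2 u Yb w (ffb h1 q w) gb -> gb != ggb h2 q (h1 / (q * w)) ->
  Pd u (h1 / q) (ffb h1 q w) != 0 -> BdenL h1 h2 q (ffb h1 q w) gb g != 0 ->
  (forall g', relB h1 h2 u (ffb h1 q w) gb g' <-> g' = g) ->
  h1 ^+ 4 * Ufun u w * (g - gg h2 (h1 / (q * w))) * Yb w
  = q ^+ 4 * w ^+ 8 * Ufun u (h1 / (q * w)) * (g - gg h2 w) * Yb (q * w).
Proof.
move=> w0 wq Y0 [_ ratio] gb_neq Pd0 D0 relB_uniq.
have := relB_residue_eq0 w0 wq Pd0 D0 relB_uniq; rewrite /relB_residue.
have d0 : gb - ggb h2 q (h1 / (q * w)) != 0 by rewrite subr_eq0.
have -> : gb - ggb h2 q w = Yb (q * w) / Yb w * (gb - ggb h2 q (h1 / (q * w))).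
  by rewrite -ratio divfK.
move: (gb - _) d0 => d d0 res0; apply/eqP; rewrite -subr_eq0; apply/eqP.
apply: (mulIf (mulf_neq0 d0 (invr_neq0 Y0))); rewrite mul0r -res0.
by field.
Qed.

Lemma L1u_at_z_Qbar (z gb g : R) :
  z != 0 -> q * z ^+ 2 != h1 -> Ufun u (h1 / (q * z)) != 0 -> Yb z != 0 ->
  QbarPt h1 h2 u Yb z (ffb h1 q z) gb -> gb != ggb h2 q (h1 / (q * z)) ->
  Pd u (h1 / q) (ffb h1 q z) != 0 -> BdenL h1 h2 q (ffb h1 q z) gb g != 0 ->
  (forall g', relB h1 h2 u (ffb h1 q z) gb g' <-> g' = g) -> g != gg h2 z ->
  L1u_at_z h1 h2 u Yb z (ffb h1 q z) g = 0.
Proof.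
move=> z0 qz U0 Y0 Qz gb_neq Pd0 D0 relB_uniq g_neq.
have zq : z ^+ 2 * q != h1 by rewrite mulrC.
move/eqP: (relB_at_Qbar z0 zq Y0 Qz gb_neq Pd0 D0 relB_uniq).
rewrite eq_sym -subr_eq0 => /eqP E.
have c0 : q ^+ 4 * z ^+ 8 * Ufun u (h1 / (q * z)) * (g - gg h2 z) != 0.
  by rewrite mulf_neq0 ?subr_eq0 // mulf_neq0 // mulf_neq0 ?expf_neq0.
rewrite /L1u_at_z /T2res /= subrr mul0r add0r; apply/eqP.
rewrite mulf_eq0; apply/orP; right; apply/eqP.
apply: (mulIf c0); rewrite mul0r -E.
by field; rewrite z0 q_neq0 U0 subr_eq0 g_neq.
Qed.

Lemma L1u_at_zq_Qbar (z gb g : R) :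
  z != 0 -> Ufun u (z / q) != 0 -> Yb (z / q) != 0 ->
  QbarPt h1 h2 u Yb (z / q) (ffb h1 q (z / q)) gb ->
  gb != ggb h2 q (h1 / (q * (z / q))) ->
  Pd u (h1 / q) (ffb h1 q (z / q)) != 0 ->
  BdenL h1 h2 q (ffb h1 q (z / q)) gb g != 0 ->
  (forall g', relB h1 h2 u (ffb h1 q (z / q)) gb g' <-> g' = g) ->
  g != gg h2 (h1 / z) ->
  L1u_at_zq h1 h2 u Yb z (ffb h1 q (z / q)) g = 0.
Proof.
move=> z0 U0 Y0 Qzq gb_neq Pd0 D0 relB_uniq g_neq.
have qzq : q * (z / q) = z by rewrite mulrC divfK.
have zq0 : z / q != 0 by rewrite mulf_neq0 ?invr_eq0.
rewrite /L1u_at_zq /T1res /= subrr mul0r add0r; apply/eqP.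
rewrite mulf_eq0; apply/orP; right; apply/eqP.
have [branch|zq] := eqVneq (z ^+ 2) (h1 * q).
  (* fbar(z/q) is then a branch point of the Joukowski map, where relB_at_Qbar
     does not apply; instead the two points h1/z and z/q coincide. *)
  have h1zE : h1 / z = z / q by apply/eqP; rewrite eqr_div // -expr2 branch.
  rewrite qzq h1zE in gb_neq; rewrite h1zE in g_neq *.
  have Yzq : Yb z = Yb (z / q).
    case: Qzq => _ /=; rewrite qzq h1zE divff ?subr_eq0 //.
    by move/(congr1 (fun x => x * Yb (z / q))); rewrite mul1r divfK.
  have z8 : z ^+ 8 = (h1 * q) ^+ 4 by rewrite -branch -exprM.
  rewrite Yzq z8 !divff ?subr_eq0 //.
  by field; rewrite ?h1_neq0 ?q_neq0.
have zq' : (z / q) ^+ 2 * q != h1.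
  apply: contra zq => /eqP zqE; apply/eqP.
  have -> : z ^+ 2 = (z / q) ^+ 2 * q * q by field.
  by rewrite zqE.
move/eqP: (relB_at_Qbar zq0 zq' Y0 Qzq gb_neq Pd0 D0 relB_uniq).
rewrite qzq -subr_eq0 => /eqP E.
have c0 : h1 ^+ 4 * Ufun u (z / q) * (g - gg h2 (h1 / z)) != 0.
  by rewrite mulf_neq0 ?subr_eq0 // mulf_neq0 ?expf_neq0.
apply: (mulIf c0); rewrite mul0r -E.
by field; rewrite q_neq0 subr_eq0 g_neq U0 h1_neq0.
Qed.

End LocalEquations.

Theorem lemma6 (R : numClosedFieldType) (h1 h2 : R) (u : 'I_8 -> R) (z : R)
    (Yb : R -> R)
    (* genericity of the parameters *)
    (h1_neq0 : h1 != 0) (h2_neq0 : h2 != 0) (u_neq0 : forall i, u i != 0)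
    (z_neq0 : z != 0)
    (gen_z : [/\ Ufun u z != 0, Ufun u (z / qpar h1 h2 u) != 0,
                 Ufun u (h1 / z) != 0 & Ufun u (h1 / (qpar h1 h2 u * z)) != 0])
    (gen_z2 : [/\ z ^+ 2 != h1, z ^+ 2 != h1 * qpar h1 h2 u ^+ 2
                & qpar h1 h2 u * z ^+ 2 != h1])
    (gen_Y : [/\ Yb (z / qpar h1 h2 u) != 0, Yb z != 0 & Yb (qpar h1 h2 u * z) != 0]) :
  let q := qpar h1 h2 u in
  (* the curve passes through \bar Q(z) *)
  (forall gb g : R,
     QbarPt h1 h2 u Yb z (ffb h1 q z) gb ->
     gb != ggb h2 q (h1 / (q * z)) ->
     Pd u (h1 / q) (ffb h1 q z) != 0 ->
     BdenL h1 h2 q (ffb h1 q z) gb g != 0 ->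
     (forall g', relB h1 h2 u (ffb h1 q z) gb g' <-> g' = g) ->
     g != gg h2 z ->
     L1u_at_z h1 h2 u Yb z (ffb h1 q z) g = 0)
  /\
  (* the curve passes through \bar Q(z/q) *)
  (forall gb g : R,
     QbarPt h1 h2 u Yb (z / q) (ffb h1 q (z / q)) gb ->
     gb != ggb h2 q (h1 / (q * (z / q))) ->
     Pd u (h1 / q) (ffb h1 q (z / q)) != 0 ->
     BdenL h1 h2 q (ffb h1 q (z / q)) gb g != 0 ->
     (forall g', relB h1 h2 u (ffb h1 q (z / q)) gb g' <-> g' = g) ->
     g != gg h2 (h1 / z) ->
     L1u_at_zq h1 h2 u Yb z (ffb h1 q (z / q)) g = 0).
Proof.
move=> q; case: gen_z => _ Uzq0 _ Uhqz0; case: gen_z2 => _ _ qz2_neq.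
case: gen_Y => Yzq0 Yz0 _.
have q_neq0 : q != 0.
  rewrite /q /qpar mulf_neq0 ?invr_eq0 ?mulf_neq0 ?expf_neq0 //.
  by apply/prodf_neq0 => i _; apply: u_neq0.
split=> gb g.
- by apply: L1u_at_z_Qbar.
- by apply: L1u_at_zq_Qbar.
Qed.
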